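(* Let $p\ge2$, $q\ge2$, and let $\mathcal M_{\mathrm{reg}}$, $\mathcal M_i$ and $\mathcal A_{\mathrm{class}}$ be as in the context. Let $\tilde a,\tilde b\in\mathcal M_{\mathrm{reg}}$ be such that there is no $i\in\{1,\dots,p\}$ with $\tilde a\in\mathcal M_i$ and $\tilde b\in\mathcal M_i$. Then some function in $\mathcal A_{\mathrm{class}}$ takes different values at $\tilde a$ and $\tilde b$.
   Context: Let $\Gamma=\mathbb{R}^{2(p+q)}$ with coordinates $(\boldsymbol u,\boldsymbol p,\boldsymbol v,\boldsymbol\pi)$, $\boldsymbol u,\boldsymbol p\in\mathbb{R}^p$, $\boldsymbol v,\boldsymbol\pi\in\mathbb{R}^q$. Let $\bar\Gamma$ be the set where $H_1=\tfrac12(\boldsymbol p^2-\boldsymbol v^2)$, $H_2=\tfrac12(\boldsymbol\pi^2-\boldsymbol u^2)$ and $D=\boldsymbol u\cdot\boldsymbol p-\boldsymbol v\cdot\boldsymbol\pi$ all vanish. ${\mathrm{SL}}(2,\mathbb{R})$ acts on $\Gamma$ by $(\boldsymbol u,\boldsymbol p)^T\mapsto g(\boldsymbol u,\boldsymbol p)^T$, $(\boldsymbol\pi,\boldsymbol v)^T\mapsto g(\boldsymbol\pi,\boldsymbol v)^T$ (acting componentwise on the pairs $(u_i,p_i)$, $(\pi_j,v_j)$), preserving $\bar\Gamma$. Let $\bar\Gamma_{\mathrm{reg}}$ be the set of points of $\bar\Gamma$ at which both pairs $(\boldsymbol u,\boldsymbol p)$ and $(\boldsymbol v,\boldsymbol\pi)$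 are linearly independent, and $\mathcal M_{\mathrm{reg}}=\bar\Gamma_{\mathrm{reg}}/{\mathrm{SL}}(2,\mathbb{R})$. For $x_k=(u_k,p_k)$ ($1\le k\le p$) and $x_{p+k}=(\pi_k,v_k)$ ($1\le k\le q$), set $\mathcal O_{kj}=x_k\times x_j$ (the scalar cross product on $\mathbb{R}^2$); these are gauge invariant, and $\mathcal A_{\mathrm{class}}$ is the algebra of functions on $\mathcal M_{\mathrm{reg}}$ generated by them. For $1\le i\le p$, $\mathcal M_i$ is the set of points of $\mathcal M_{\mathrm{reg}}$ having a representative satisfying $\boldsymbol u^2=\boldsymbol p^2=\boldsymbol v^2=\boldsymbol\pi^2>0$, $\boldsymbol u\cdot\boldsymbol p=\boldsymbol v\cdot\boldsymbol\pi=0$ and $u_i^2+p_i^2>0$. *)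

From HB Require Import structures.
From mathcomp Require Import all_boot all_order all_algebra.
From mathcomp Require Import reals.
Set Implicit Arguments. Unset Strict Implicit. Unset Printing Implicit Defensive.
Import Order.TTheory GRing.Theory Num.Theory.
Local Open Scope ring_scope.

Section Defs.
Variables (R : realType) (p q : nat).

Record point := Point {
  pu : 'I_p -> R; pp : 'I_p -> R;
  pv : 'I_q -> R; ppi : 'I_q -> R }.

Definition dot n (a b : 'I_n -> R) : R := \sum_(i < n) a i * b i.

Definition H1 (x : point) : R := (dot (pp x) (pp x) - dot (pv x) (pv x)) / 2.
Definition H2 (x : point) : R := (dot (ppi x) (ppi x) - dot (pu x) (pu x)) / 2.
Definition Dc (x : point) : R := dot (pu x) (pp x) - dot (pv x) (ppi x).

Definition in_Gbar (x : point) : Prop := H1 x = 0 /\ H2 x = 0 /\ Dc x = 0.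

Definition lin_indep2 n (a b : 'I_n -> R) : Prop :=
  forall c d : R, (forall i, c * a i + d * b i = 0) -> c = 0 /\ d = 0.

Definition in_Greg (x : point) : Prop :=
  in_Gbar x /\ lin_indep2 (pu x) (pp x) /\ lin_indep2 (pv x) (ppi x).

Record mat2 := Mat2 { ga : R; gb : R; gc : R; gd : R }.
Definition det2 (g : mat2) : R := ga g * gd g - gb g * gc g.

Definition act (g : mat2) (x : point) : point :=
  Point (fun i => ga g * pu x i + gb g * pp x i)
        (fun i => gc g * pu x i + gd g * pp x i)
        (fun j => gc g * ppi x j + gd g * pv x j)
        (fun j => ga g * ppi x j + gb g * pv x j).

(* x_k = (u_k, p_k) for k < p,  x_{p+k} = (pi_k, v_k) *)
Definition xvec (x : point) (k : 'I_(p + q)) : R * R :=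
  match split k with
  | inl i => (pu x i, pp x i)
  | inr j => (ppi x j, pv x j)
  end.

Definition cross2 (a b : R * R) : R := a.1 * b.2 - a.2 * b.1.

Definition Ofun (k j : 'I_(p + q)) (x : point) : R := cross2 (xvec x k) (xvec x j).

(* The algebra generated by the O_kj (as functions on representatives;
   all its elements are gauge invariant). *)
Inductive in_Aclass : (point -> R) -> Prop :=
  | A_const c : in_Aclass (fun _ => c)
  | A_gen k j : in_Aclass (Ofun k j)
  | A_add f g : in_Aclass f -> in_Aclass g -> in_Aclass (fun x => f x + g x)
  | A_mul f g : in_Aclass f -> in_Aclass g -> in_Aclass (fun x => f x * g x).

(* The orbit of x lies in M_i: some representative g.x has the stated form. *)
Definition in_Mi (i : 'I_p) (x : point) : Prop :=
  exists g : mat2, det2 g = 1 /\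
    let y := act g x in
    dot (pu y) (pu y) = dot (pp y) (pp y) /\
    dot (pp y) (pp y) = dot (pv y) (pv y) /\
    dot (pv y) (pv y) = dot (ppi y) (ppi y) /\
    0 < dot (pu y) (pu y) /\
    dot (pu y) (pp y) = 0 /\ dot (pv y) (ppi y) = 0 /\
    0 < pu y i ^+ 2 + pp y i ^+ 2.

End Defs.

(** Every regular point [x] with [(u_i, p_i) <> 0] lies in [M_i]: the
constraints [H1 = H2 = D = 0] force the pairs [(u, p)] and [(pi, v)] to have the same Gram
matrix [[A, C], [C, B]], which is positive definite by linear independence,
and the single SL(2) matrix that orthonormalises this Gram matrix up to the
scale [sqrt (A B - C^2)] brings both pairs into the normal form defining
[M_i]. Hence if [a] and [b] share no [M_i], then for an index [i] with
[(u_i, p_i)(a) <> 0] the vector [(u_i, p_i)(b)] vanishes; by linear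
independence some [O_ik] is nonzero at [a], while every [O_ik] vanishes at [b]. *)

From HB Require Import structures.
From mathcomp Require Import all_boot all_order all_algebra.
From mathcomp Require Import reals.
From mathcomp Require Import ring.
Set Implicit Arguments. Unset Strict Implicit. Unset Printing Implicit Defensive.
Import Order.TTheory GRing.Theory Num.Theory.
Local Open Scope ring_scope.

Section Gram.
Variable R : realType.
Implicit Types (A B C x y : R) (n : nat).

Lemma sqr_add_gt0 x y : (0 < x ^+ 2 + y ^+ 2) = (x != 0) || (y != 0).
Proof.
by rewrite lt_def addr_ge0 ?sqr_ge0 // andbT paddr_eq0 ?sqr_ge0 // !sqrf_eq0 negb_and.
Qed.

Lemma dotC n (a b : 'I_n -> R) : dot a b = dot b a.
Proof. by apply: eq_bigr => i _; rewrite mulrC. Qed.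

Lemma dot_gt0 n (a : 'I_n -> R) k : a k != 0 -> 0 < dot a a.
Proof.
move=> ak_neq0; rewrite /dot (bigD1 k) //= ltr_pwDl ?sumr_ge0 // => [|i _].
  by rewrite -expr2 exprn_even_gt0.
by rewrite -expr2 sqr_ge0.
Qed.

Definition bilin2 A B C (x1 y1 x2 y2 : R) : R :=
  x1 * x2 * A + (x1 * y2 + y1 * x2) * C + y1 * y2 * B.

Lemma bilin2C A B C (x1 y1 x2 y2 : R) :
  bilin2 A B C x1 y1 x2 y2 = bilin2 A B C x2 y2 x1 y1.
Proof. by rewrite /bilin2; ring. Qed.

Lemma dot_lincomb n (a b : 'I_n -> R) (x1 y1 x2 y2 : R) :
  dot (fun i => x1 * a i + y1 * b i) (fun i => x2 * a i + y2 * b i) =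
  bilin2 (dot a a) (dot b b) (dot a b) x1 y1 x2 y2.
Proof.
rewrite /bilin2 /dot !mulr_sumr -!big_split /=.
by apply: eq_bigr => i _; ring.
Qed.

Lemma lin_indep2_comb n (a b : 'I_n -> R) x y :
  lin_indep2 a b -> (x != 0) || (y != 0) -> exists k, x * a k + y * b k != 0.
Proof.
move=> indep_ab xy_neq0.
have [/existsP //|/existsPn comb0] := boolP [exists k, x * a k + y * b k != 0].
have [x0 y0] := indep_ab x y (fun k => eqP (negbNE (comb0 k))).
by move: xy_neq0; rewrite x0 y0 eqxx.
Qed.

Lemma lin_indep2_cross n (a b : 'I_n -> R) i :
  lin_indep2 a b -> (a i != 0) || (b i != 0) -> exists k, a i * b k - b i * a k != 0.
Proof.
move=> indep_ab abi_neq0.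
have [|k] := lin_indep2_comb (x := b i) (y := - a i) indep_ab.
  by rewrite oppr_eq0 orbC.
move=> comb_neq0; exists k.
have -> : a i * b k - b i * a k = - (b i * a k + - a i * b k) by ring.
by rewrite oppr_eq0.
Qed.

Lemma lin_indep2_neq0 n (a b : 'I_n -> R) : lin_indep2 a b -> exists k, a k != 0.
Proof.
move=> indep_ab; have [|k] := lin_indep2_comb (x := 1) (y := 0) indep_ab.
  by rewrite oner_neq0.
by rewrite mul1r mul0r addr0; exists k.
Qed.

Lemma lin_indep2_dot_gt0 n (a b : 'I_n -> R) : lin_indep2 a b -> 0 < dot a a.
Proof. by move=> /lin_indep2_neq0 [k /dot_gt0]. Qed.

Lemma gram_det_gt0 n (a b : 'I_n -> R) : lin_indep2 a b ->
  0 < dot a a * dot b b - dot a b * dot a b.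
Proof.
move=> indep_ab; set A := dot a a; set C := dot a b.
have A_gt0 : 0 < A := lin_indep2_dot_gt0 indep_ab.
have [|l wl_neq0] := lin_indep2_comb (x := - (C / A)) (y := 1) indep_ab.
  by rewrite oner_neq0 orbT.
(* [A * |b - (C / A) a|^2 = A B - C^2] *)
have /(mulr_gt0 A_gt0) := dot_gt0 (a := fun i => - (C / A) * a i + 1 * b i) wl_neq0.
rewrite dot_lincomb /bilin2 -/A -/C.
have A_neq0 : A != 0 by rewrite gt_eqF.
by congr (0 < _); field.
Qed.

Lemma mat2_inj (g : mat2 R) x y : det2 g != 0 ->
  ga g * x + gb g * y = 0 -> gc g * x + gd g * y = 0 -> x = 0 /\ y = 0.
Proof.
move=> det_neq0 e1 e2.
have ex : det2 g * x = gd g * (ga g * x + gb g * y) - gb g * (gc g * x + gd g * y).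
  by rewrite /det2; ring.
have ey : det2 g * y = ga g * (gc g * x + gd g * y) - gc g * (ga g * x + gb g * y).
  by rewrite /det2; ring.
rewrite e1 e2 !mulr0 subrr in ex ey.
by move/eqP: ex; move/eqP: ey; rewrite !mulf_eq0 (negbTE det_neq0) => /eqP ? /eqP.
Qed.

(* Scale [a] by [s] and orthogonalise [b] against it, with [s] chosen so that
both new squared norms equal [sqrt (A B - C^2)]. *)
Definition gram_normalizer A B C : mat2 R :=
  let s := Num.sqrt (Num.sqrt (A * B - C * C) / A) in
  Mat2 s 0 (- C / (A * s)) s^-1.

Lemma gram_normalizerP A B C : 0 < A -> 0 < A * B - C * C ->
  let g := gram_normalizer A B C in
  let r := Num.sqrt (A * B - C * C) in
  [/\ det2 g = 1,
      bilin2 A B C (ga g) (gb g) (ga g) (gb g) = r,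
      bilin2 A B C (gc g) (gd g) (gc g) (gd g) = r &
      bilin2 A B C (ga g) (gb g) (gc g) (gd g) = 0].
Proof.
move=> A_gt0 D_gt0 /=; set D := A * B - C * C; set r := Num.sqrt D.
set s := Num.sqrt (r / A).
have r_gt0 : 0 < r by rewrite sqrtr_gt0.
have r_neq0 : r != 0 by rewrite gt_eqF.
have A_neq0 : A != 0 by rewrite gt_eqF.
have s_neq0 : s != 0 by rewrite gt_eqF // sqrtr_gt0 divr_gt0.
have ssA : s * s * A = r by rewrite -expr2 sqr_sqrtr ?divfK // ltW ?divr_gt0.
rewrite /det2 /bilin2 /=; split.
- by rewrite mul0r subr0 mulfV.
- by rewrite -ssA; ring.
- transitivity (D / (s * s * A)); first by rewrite /D; field; rewrite A_neq0 s_neq0.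
  have rr : r * r = D by rewrite -expr2 sqr_sqrtr // ltW.
  by rewrite ssA -rr mulfK.
- by field; rewrite A_neq0 s_neq0.
Qed.

End Gram.

Section Points.
Variables (R : realType) (p q : nat).
Implicit Types x : point R p q.

Definition active x (i : 'I_p) : bool := (pu x i != 0) || (pp x i != 0).

Lemma in_Gbar_gram x : in_Gbar x ->
  [/\ dot (ppi x) (ppi x) = dot (pu x) (pu x),
      dot (pv x) (pv x) = dot (pp x) (pp x) &
      dot (ppi x) (pv x) = dot (pu x) (pp x)].
Proof.
rewrite /in_Gbar /H1 /H2 /Dc => -[/eqP+ [/eqP+ /eqP+]].
rewrite !mulf_eq0 invr_eq0 pnatr_eq0 !orbF !subr_eq0 => /eqP-> /eqP-> /eqP->.
by rewrite dotC.
Qed.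

Lemma in_Mi_active x i : in_Greg x -> active x i -> in_Mi i x.
Proof.
move=> [Gx [indep_up _]] xi_active.
have [ePP eVV eVP] := in_Gbar_gram Gx.
have A_gt0 := lin_indep2_dot_gt0 indep_up.
have D_gt0 := gram_det_gt0 indep_up.
have [] := gram_normalizerP A_gt0 D_gt0.
move: (gram_normalizer _ _ _) => g det1 norm_a norm_b orth_ab; exists g.
rewrite /= !dot_lincomb ePP eVV eVP [bilin2 _ _ _ (gc g) _ (ga g) _]bilin2C.
rewrite norm_a norm_b orth_ab; do !split => //.
  by rewrite sqrtr_gt0.
rewrite sqr_add_gt0 -negb_and; apply: contraL xi_active => /andP [/eqP e1 /eqP e2].
have det_neq0 : det2 g != 0 by rewrite det1 oner_neq0.
by rewrite /active; have [-> ->] := mat2_inj det_neq0 e1 e2; rewrite eqxx.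
Qed.

Lemma Ofun_lshift (i k : 'I_p) x :
  Ofun (lshift q i) (lshift q k) x = pu x i * pp x k - pp x i * pu x k.
Proof. by rewrite /Ofun /xvec !(unsplitK (inl _ _)). Qed.

End Points.

Theorem mainTheorem4 (R : realType) (p q : nat) (hp : (2 <= p)%N) (hq : (2 <= q)%N)
  (a b : point R p q) :
  in_Greg a -> in_Greg b ->
  ~ (exists i : 'I_p, in_Mi i a /\ in_Mi i b) ->
  exists f : point R p q -> R, in_Aclass f /\ f a <> f b.
Proof.
move=> Ga Gb not_both.
have indep_a := Ga.2.1.
have [i ai_neq0] := lin_indep2_neq0 indep_a.
have ai : active a i by rewrite /active ai_neq0.
have [bi | bi_inactive] := boolP (active b i).
  by case: not_both; exists i; split; apply: in_Mi_active.
have [k cross_neq0] := lin_indep2_cross indep_a ai.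
exists (Ofun (lshift q i) (lshift q k)); split; first exact: A_gen.
move: bi_inactive; rewrite !Ofun_lshift negb_or !negbK => /andP [/eqP -> /eqP ->].
by rewrite !mul0r subrr; apply/eqP.
Qed.
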